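(* Let $C=\mathbb{S}^1\times\mathbb{R}$ be the flat Euclidean cylinder with distance $d$, $\theta_0\in\mathbb{S}^1$, $v=\{\theta_0\}\times\mathbb{R}$, and let $f:C\to C$ be a geodesic-preserving bijection with $f(v)=v$, $f(\theta_0,0)=(\theta_0,0)$ and $f(\theta_0,1)=(\theta_0,1)$. If $x,y\in C$ lie on the same vertical geodesic and $d(x,y)=1$, then $d(f(x),f(y))=1$.
   Context: $C$ carries the product of the flat metric on $\mathbb{S}^1=\mathbb{R}/\mathbb{Z}$ (circumference $1$) and the standard metric on $\mathbb{R}$. A geodesic is the image of a locally isometric immersion of the whole real line; a bijection (not assumed continuous) is geodesic-preserving if it maps every geodesic onto a geodesic as a set. Vertical geodesics are the lines $\{\theta\}\times\mathbb{R}$. *)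

From Stdlib Require Import Reals.
Open Scope R_scope.

(* S^1 = R/Z, represented by the canonical representatives in [0,1). *)
Definition S1 : Type := {t : R | 0 <= t < 1}.

Definition dS1 (a b : S1) : R :=
  Rmin (Rabs (proj1_sig a - proj1_sig b)) (1 - Rabs (proj1_sig a - proj1_sig b)).

Definition Cyl : Type := (S1 * R)%type.

Definition dC (p q : Cyl) : R :=
  sqrt (dS1 (fst p) (fst q) ^ 2 + (snd p - snd q) ^ 2).

Definition loc_isom (g : R -> Cyl) : Prop :=
  forall s : R, exists eps : R, 0 < eps /\
    forall t u : R, Rabs (t - s) < eps -> Rabs (u - s) < eps ->
      dC (g t) (g u) = Rabs (t - u).

Definition is_geodesic (G : Cyl -> Prop) : Prop :=
  exists g : R -> Cyl, loc_isom g /\ forall p, G p <-> exists s, g s = p.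

Definition img (f : Cyl -> Cyl) (G : Cyl -> Prop) : Cyl -> Prop :=
  fun p => exists q, G q /\ f q = p.

Definition bijective_map (f : Cyl -> Cyl) : Prop :=
  (forall p q, f p = f q -> p = q) /\ (forall p, exists q, f q = p).

Definition geodesic_preserving (f : Cyl -> Cyl) : Prop :=
  forall G, is_geodesic G -> is_geodesic (img f G).

Definition vertical (th : S1) : Cyl -> Prop := fun p => fst p = th.

(* A locally isometric immersion of the line into the flat cylinder is affine in the
   universal cover, so every geodesic is a vertical line or a helix {(a + s, c + q s)}, the
   horizontal circles being the helices of pitch 0.  As f is injective and fixes the vertical
   through th0, which every helix meets, f maps verticals to verticals; the same count of
   intersection points shows that it maps horizontal circles to horizontal circles, so
   f (t, y) = (col t, height y) for bijections col and height.  The helix of pitch m meets a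
   vertical in a progression x + mZ and its image is a helix, so height maps every progression
   x + mZ onto a progression height x + q_m Z.  Indexing height on Z by height 0 + q_1 Z gives a
   bijection of Z carrying classes mod N onto classes mod r, where q_N = r q_1, so |r| = N by
   counting classes.  If height (x + 1) = height x + j q_1, then for N = |j| the step j q_1 = +-q_N
   keeps height (x + 1) in the image of x + NZ, so N = 1; the normalisation height 0 = 0,
   height 1 = 1 finally gives |q_1| = 1. *)

From Stdlib Require Import Reals Lra Lia ZArith List.
From Stdlib Require Import Classical ProofIrrelevance IndefiniteDescription.
From Coquelicot Require Import Coquelicot.
Open Scope R_scope.

Definition cong (x y : R) : Prop := exists k : Z, x - y = IZR k.

Lemma cong_sym x y : cong x y -> cong y x.
Proof. intros [k Hk]. exists (- k)%Z. rewrite opp_IZR. lra. Qed.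

Lemma cong_trans x y z : cong x y -> cong y z -> cong x z.
Proof. intros [k Hk] [l Hl]. exists (k + l)%Z. rewrite plus_IZR. lra. Qed.

Lemma cong_sub x x' y y' : cong x x' -> cong y y' -> cong (x - y) (x' - y').
Proof. intros [k Hk] [l Hl]. exists (k - l)%Z. rewrite minus_IZR. lra. Qed.

Lemma cong_small x y : cong x y -> Rabs (x - y) < 1 -> x = y.
Proof.
  intros [k Hk] Hxy. rewrite Hk in Hxy. apply Rabs_def2 in Hxy as [H1 H2].
  assert (k = 0%Z) as -> by (assert (-1 < k < 1)%Z by (split; apply lt_IZR; simpl; lra); lia).
  simpl in Hk. lra.
Qed.

Lemma cong_frac_part x y : cong x y -> frac_part x = frac_part y.
Proof.
  intros [k Hk]. destruct (base_fp y) as [Hy0 Hy1].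
  symmetry. apply (Int_part_frac_part_spec x (Int_part y + k)); [lra|].
  rewrite plus_IZR. pose proof (Rplus_Int_part_frac_part y). lra.
Qed.

Lemma frac_part_cong x : cong (frac_part x) x.
Proof. exists (- Int_part x)%Z. rewrite opp_IZR. unfold frac_part. ring. Qed.

Lemma S1_eq (a b : S1) : cong (proj1_sig a) (proj1_sig b) -> a = b.
Proof.
  destruct a as [a Ha], b as [b Hb]; simpl; intro H.
  assert (a = b) as <- by (apply cong_small; [exact H | apply Rabs_def1; lra]).
  f_equal. apply proof_irrelevance.
Qed.

Lemma frac_part_bounds x : 0 <= frac_part x < 1.
Proof. destruct (base_fp x). lra. Qed.

Definition S1of (x : R) : S1 := exist _ (frac_part x) (frac_part_bounds x).

Lemma S1of_cong x : cong (proj1_sig (S1of x)) x.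
Proof. apply frac_part_cong. Qed.

Definition centered (x : R) : R := frac_part (x + 1 / 2) - 1 / 2.

Lemma centered_cong x : cong (centered x) x.
Proof.
  destruct (frac_part_cong (x + 1 / 2)) as [k Hk]. exists k. unfold centered. lra.
Qed.

Lemma centered_bounds x : - (1 / 2) <= centered x < 1 / 2.
Proof. pose proof (frac_part_bounds (x + 1 / 2)). unfold centered. lra. Qed.

Lemma dS1_repr (a b : S1) x :
  cong (proj1_sig a - proj1_sig b) x -> Rabs x <= 1 / 2 -> dS1 a b = Rabs x.
Proof.
  destruct a as [a Ha], b as [b Hb]; unfold dS1; simpl. intros [k Hk] Hx.
  assert (k = -1 \/ k = 0 \/ k = 1)%Z as [-> | [-> | ->]].
  { assert (-2 < k < 2)%Z; [split; apply lt_IZR; simpl; split_Rabs; lra | lia]. }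
  all: simpl in Hk; unfold Rmin; destruct (Rle_dec _ _); split_Rabs; lra.
Qed.

Lemma dS1_centered (a b : S1) : dS1 a b = Rabs (centered (proj1_sig a - proj1_sig b)).
Proof.
  apply dS1_repr; [apply cong_sym, centered_cong|].
  pose proof (centered_bounds (proj1_sig a - proj1_sig b)). apply Rabs_le. lra.
Qed.

Lemma dS1_refl a : dS1 a a = 0.
Proof. rewrite (dS1_repr a a 0); [apply Rabs_R0 | exists 0%Z; ring | rewrite Rabs_R0; lra]. Qed.

Lemma dS1_nonneg a b : 0 <= dS1 a b.
Proof. rewrite dS1_centered. apply Rabs_pos. Qed.

Lemma dC_sqr p q : dC p q ^ 2 = dS1 (fst p) (fst q) ^ 2 + (snd p - snd q) ^ 2.
Proof.
  apply pow2_sqrt.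
  pose proof (pow2_ge_0 (dS1 (fst p) (fst q))). pose proof (pow2_ge_0 (snd p - snd q)). lra.
Qed.

Lemma dC_same_column p q : fst p = fst q -> dC p q = Rabs (snd p - snd q).
Proof.
  intro E. unfold dC. rewrite E, dS1_refl, <- sqrt_Rsqr_abs. f_equal. unfold Rsqr. ring.
Qed.

Lemma dS1_le_dC p q : dS1 (fst p) (fst q) <= dC p q.
Proof.
  unfold dC. rewrite <- (sqrt_pow2 (dS1 _ _)) at 1 by apply dS1_nonneg.
  apply sqrt_le_1_alt. pose proof (pow2_ge_0 (snd p - snd q)). lra.
Qed.

Lemma plane_collinear a1 a2 b1 b2 h k :
  a1 ^ 2 + a2 ^ 2 = h ^ 2 -> b1 ^ 2 + b2 ^ 2 = k ^ 2 ->
  (a1 - b1) ^ 2 + (a2 - b2) ^ 2 = (h - k) ^ 2 ->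
  h * b1 = k * a1 /\ h * b2 = k * a2.
Proof.
  intros Ha Hb Hab.
  assert (Hdot : a1 * b1 + a2 * b2 = h * k) by nra.
  assert (H0 : (k * a1 - h * b1)² + (k * a2 - h * b2)² = 0).
  { transitivity (k ^ 2 * (a1 ^ 2 + a2 ^ 2) + h ^ 2 * (b1 ^ 2 + b2 ^ 2)
                  - 2 * h * k * (a1 * b1 + a2 * b2)); [unfold Rsqr; ring|].
    rewrite Ha, Hb, Hdot. ring. }
  apply Rplus_sqr_eq_0 in H0. lra.
Qed.

Lemma isometric_interval_affine (p1 p2 : R -> R) s eps : 0 < eps ->
  (forall t u, Rabs (t - s) < eps -> Rabs (u - s) < eps ->
     (t - u) ^ 2 = (p1 t - p1 u) ^ 2 + (p2 t - p2 u) ^ 2) ->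
  exists e1 e2, e1 ^ 2 + e2 ^ 2 = 1 /\
    forall u, Rabs (u - s) < eps -> p1 u = p1 s + (u - s) * e1 /\ p2 u = p2 s + (u - s) * e2.
Proof.
  intros Heps Hiso.
  set (h := eps / 2).
  assert (Hs : Rabs (s - s) < eps) by (rewrite Rminus_diag, Rabs_R0; exact Heps).
  assert (Hh : Rabs (s + h - s) < eps) by (unfold h; split_Rabs; lra).
  exists ((p1 (s + h) - p1 s) / h), ((p2 (s + h) - p2 s) / h).
  pose proof (Hiso (s + h) s Hh Hs) as Eh.
  assert (Hh0 : h <> 0) by (unfold h; lra).
  split.
  - assert (Eh' : (p1 (s + h) - p1 s) ^ 2 + (p2 (s + h) - p2 s) ^ 2 = h ^ 2)
      by (rewrite <- Eh; ring).
    replace 1 with (h ^ 2 / h ^ 2) by (field; exact Hh0). rewrite <- Eh' at 1. field. exact Hh0.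
  - intros u Hu.
    destruct (plane_collinear (p1 (s + h) - p1 s) (p2 (s + h) - p2 s)
                (p1 u - p1 s) (p2 u - p2 s) h (u - s)) as [E1 E2].
    + rewrite <- Eh. ring.
    + rewrite <- (Hiso u s Hu Hs). reflexivity.
    + replace (h - (u - s)) with (s + h - u) by ring. rewrite (Hiso (s + h) u Hh Hu). ring.
    + split; apply (Rmult_eq_reg_l h); try exact Hh0; field_simplify; try exact Hh0; lra.
Qed.

Lemma locally_constant_const (h : R -> R) :
  (forall s, exists eps, 0 < eps /\ forall t, Rabs (t - s) < eps -> h t = h s) ->
  forall x y, h x = h y.
Proof.
  intros Hloc.
  assert (Hder : forall t, is_derive h t zero).
  { intro t. destruct (Hloc t) as [eps [Heps Ht]].
    apply (is_derive_ext_loc (fun _ => h t)); [|apply is_derive_const].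
    exists (mkposreal eps Heps). intros u Hu. symmetry. apply Ht, Hu. }
  intros x y. destruct (Rtotal_order x y) as [Hxy | [-> | Hxy]]; [| reflexivity |].
  - apply eq_is_derive; [intros; apply Hder | exact Hxy].
  - symmetry. apply eq_is_derive; [intros; apply Hder | exact Hxy].
Qed.

Definition angle (p : Cyl) : R := proj1_sig (fst p).

Definition straight_near (g : R -> Cyl) (s eps e1 e2 : R) : Prop :=
  0 < eps /\ e1 ^ 2 + e2 ^ 2 = 1 /\
  forall u, Rabs (u - s) < eps ->
    cong (angle (g u)) (angle (g s) + (u - s) * e1) /\ snd (g u) = snd (g s) + (u - s) * e2.

Lemma loc_isom_straight g :
  loc_isom g -> forall s, exists eps e1 e2, straight_near g s eps e1 e2.
Proof.
  intros Hg s. destruct (Hg s) as [e0 [He0 Hiso]].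
  set (eps := Rmin e0 (1 / 4)).
  assert (Heps : 0 < eps /\ eps <= e0 /\ eps <= 1 / 4)
    by (unfold eps, Rmin; destruct (Rle_dec _ _); lra).
  assert (Hs : Rabs (s - s) < eps) by (rewrite Rminus_diag, Rabs_R0; lra).
  (* Lifting the angle to [centered] values near [g s] turns [g] into an isometry into the plane. *)
  set (L u := centered (angle (g u) - angle (g s))).
  assert (HL : forall u, Rabs (u - s) < eps -> Rabs (L u) < 1 / 4).
  { intros u Hu. unfold L, angle. rewrite <- dS1_centered.
    eapply Rle_lt_trans; [apply dS1_le_dC|]. rewrite Hiso by lra. lra. }
  assert (HLiso : forall t u, Rabs (t - s) < eps -> Rabs (u - s) < eps ->
            (t - u) ^ 2 = (L t - L u) ^ 2 + (snd (g t) - snd (g u)) ^ 2).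
  { intros t u Ht Hu. rewrite <- pow2_abs, <- (Hiso t u), dC_sqr by lra.
    rewrite (dS1_repr _ _ (L t - L u)), pow2_abs; [reflexivity| |].
    - apply cong_trans with ((angle (g t) - angle (g s)) - (angle (g u) - angle (g s))).
      + exists 0%Z. unfold angle. ring.
      + apply cong_sub; apply cong_sym, centered_cong.
    - pose proof (HL t Ht). pose proof (HL u Hu). split_Rabs; lra. }
  destruct (isometric_interval_affine L (fun u => snd (g u)) s eps) as [e1 [e2 [He Haff]]];
    [lra | exact HLiso |].
  exists eps, e1, e2. split; [lra|]. split; [exact He|].
  intros u Hu. destruct (Haff u Hu) as [E1 E2]. split; [|exact E2].
  destruct (centered_cong (angle (g u) - angle (g s))) as [k1 K1].
  destruct (centered_cong (angle (g s) - angle (g s))) as [k2 K2].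
  exists (k2 - k1)%Z. rewrite minus_IZR. fold (L u) (L s) in K1, K2. lra.
Qed.

Lemma straight_near_overlap g s s' eps e1 e2 eps' e1' e2' :
  straight_near g s eps e1 e2 -> straight_near g s' eps' e1' e2' ->
  Rabs (s' - s) < eps -> e1 = e1' /\ e2 = e2'.
Proof.
  intros [He [Hn H]] [He' [Hn' H']] Hs.
  set (h := Rmin (Rmin eps' (eps - Rabs (s' - s))) (1 / 4) / 2).
  assert (Hh : 0 < h /\ h < eps' /\ h < eps - Rabs (s' - s) /\ h <= 1 / 8)
    by (unfold h, Rmin; repeat destruct (Rle_dec _ _); lra).
  assert (Hu' : Rabs (s' + h - s') < eps') by (split_Rabs; lra).
  assert (Hu : Rabs (s' + h - s) < eps) by (split_Rabs; lra).
  destruct (H _ Hu) as [[k1 K1] Z1]. destruct (H s' Hs) as [[k2 K2] Z2].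
  destruct (H' _ Hu') as [[k3 K3] Z3].
  assert (He2 : e2 = e2') by (apply (Rmult_eq_reg_l h); nra).
  split; [|exact He2].
  assert (Hc : h * e1 = h * e1').
  { apply cong_small.
    - exists (k2 + k3 - k1)%Z. rewrite minus_IZR, plus_IZR. lra.
    - assert (Rabs e1 <= 1 /\ Rabs e1' <= 1) as [B B'] by (split; apply Rabs_le; nra).
      rewrite <- Rmult_minus_distr_l, Rabs_mult, (Rabs_right h) by lra.
      pose proof (Rabs_triang e1 (- e1')) as T. rewrite Rabs_Ropp in T. unfold Rminus. nra. }
  apply (Rmult_eq_reg_l h); lra.
Qed.

Lemma loc_isom_affine g : loc_isom g ->
  exists a c al be, al ^ 2 + be ^ 2 = 1 /\
    forall t, cong (angle (g t)) (a + al * t) /\ snd (g t) = c + be * t.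
Proof.
  intro Hg.
  destruct (functional_choice
              (fun s (w : R * R * R) => straight_near g s (fst (fst w)) (snd (fst w)) (snd w)))
    as [W HW].
  { intro s. destruct (loc_isom_straight g Hg s) as [eps [e1 [e2 H]]].
    exists (eps, e1, e2). exact H. }
  set (dir1 t := snd (fst (W t))). set (dir2 t := snd (W t)).
  assert (Hdir : forall s, exists eps, 0 < eps /\
                   forall t, Rabs (t - s) < eps -> dir1 t = dir1 s /\ dir2 t = dir2 s).
  { intro s. exists (fst (fst (W s))). split; [apply (HW s)|].
    intros t Ht. destruct (straight_near_overlap g s t _ _ _ _ _ _ (HW s) (HW t) Ht). auto. }
  assert (Hal : forall t, dir1 t = dir1 0).
  { intro t. apply (locally_constant_const dir1). intro s.
    destruct (Hdir s) as [eps [He H]]. exists eps. split; [exact He | apply H]. }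
  assert (Hbe : forall t, dir2 t = dir2 0).
  { intro t. apply (locally_constant_const dir2). intro s.
    destruct (Hdir s) as [eps [He H]]. exists eps. split; [exact He | apply H]. }
  set (al := dir1 0). set (be := dir2 0).
  assert (Hangle : forall t, frac_part (angle (g t) - al * t) = frac_part (angle (g 0) - al * 0)).
  { intro t. apply (locally_constant_const (fun u => frac_part (angle (g u) - al * u))).
    intro s. destruct (HW s) as [He [_ H]]. exists (fst (fst (W s))). split; [exact He|].
    intros u Hu. apply cong_frac_part. destruct (H u Hu) as [[k Hk] _].
    exists k. fold (dir1 s) in Hk. rewrite Hal in Hk. fold al in Hk. lra. }
  assert (Hheight : forall t, snd (g t) - be * t = snd (g 0) - be * 0).
  { intro t. apply (locally_constant_const (fun u => snd (g u) - be * u)).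
    intro s. destruct (HW s) as [He [_ H]]. exists (fst (fst (W s))). split; [exact He|].
    intros u Hu. destruct (H u Hu) as [_ E].
    fold (dir2 s) in E. rewrite Hbe in E. fold be in E. rewrite E. ring. }
  exists (frac_part (angle (g 0) - al * 0)), (snd (g 0) - be * 0), al, be. split.
  - destruct (HW 0) as [_ [Hn _]]. exact Hn.
  - intro t. split.
    + rewrite <- (Hangle t). destruct (frac_part_cong (angle (g t) - al * t)) as [k Hk].
      exists (- k)%Z. rewrite opp_IZR. lra.
    + rewrite <- (Hheight t). ring.
Qed.

(* The helix of pitch [q]; pitch 0 gives the horizontal circle at height [c]. *)
Definition helix (a c q : R) : Cyl -> Prop :=
  fun p => exists s, cong (angle p) (a + s) /\ snd p = c + q * s.

Lemma geodesic_cases G : is_geodesic G ->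
  (exists t, forall p, G p <-> vertical t p) \/ (exists a c q, forall p, G p <-> helix a c q p).
Proof.
  intros [g [Hg HG]]. destruct (loc_isom_affine g Hg) as [a [c [al [be [Hn H]]]]].
  destruct (Req_dec al 0) as [-> | Hal].
  - left. exists (fst (g 0)).
    assert (Hcol : forall t, fst (g t) = fst (g 0)).
    { intro t. apply S1_eq, cong_trans with a.
      - destruct (H t) as [C _]. rewrite Rmult_0_l, Rplus_0_r in C. exact C.
      - destruct (H 0) as [C _]. rewrite Rmult_0_l, Rplus_0_r in C. apply cong_sym, C. }
    intro p. rewrite HG. unfold vertical. split.
    + intros [s <-]. apply Hcol.
    + intro Hp. assert (Hbe : be <> 0) by (intros ->; lra).
      exists ((snd p - c) / be). apply injective_projections.
      * rewrite Hcol. symmetry. exact Hp.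
      * destruct (H ((snd p - c) / be)) as [_ ->]. field. exact Hbe.
  - right. exists a, c, (be / al). intro p. rewrite HG. split.
    + intros [t <-]. exists (al * t). destruct (H t) as [C ->].
      split; [exact C | field; exact Hal].
    + intros [s [C E]]. exists (s / al). apply injective_projections; cbn [fst snd].
      * apply S1_eq. apply cong_trans with (a + s); [|apply cong_sym, C].
        replace s with (al * (s / al)) at 2 by (field; exact Hal). apply H.
      * destruct (H (s / al)) as [_ ->]. rewrite E. field. exact Hal.
Qed.

Lemma vertical_geodesic t : is_geodesic (vertical t).
Proof.
  exists (fun y => (t, y)). split.
  - intro s. exists 1. split; [lra|]. intros u v _ _. apply dC_same_column. reflexivity.
  - intro p. unfold vertical. split.
    + intros <-. exists (snd p). symmetry; apply surjective_pairing.
    + intros [s <-]. reflexivity.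
Qed.

Lemma helix_geodesic a c q : is_geodesic (helix a c q).
Proof.
  set (al := / sqrt (1 + q ^ 2)).
  assert (Hq : 0 < 1 + q ^ 2) by (pose proof (pow2_ge_0 q); lra).
  assert (Hsq : 1 <= sqrt (1 + q ^ 2)).
  { rewrite <- sqrt_1 at 1. apply sqrt_le_1_alt. pose proof (pow2_ge_0 q). lra. }
  assert (Hal : 0 < al <= 1).
  { unfold al. split; [apply Rinv_0_lt_compat; lra|].
    apply Rle_trans with (/ 1); [apply Rinv_le_contravar; lra | rewrite Rinv_1; lra]. }
  assert (Hal2 : al ^ 2 * (1 + q ^ 2) = 1).
  { unfold al. rewrite pow_inv, pow2_sqrt by lra. field. lra. }
  exists (fun t => (S1of (a + al * t), c + q * (al * t))). split.
  - intro s. exists (1 / 4). split; [lra|]. intros t u Ht Hu.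
    unfold dC. cbn [fst snd].
    rewrite (dS1_repr _ _ (al * (t - u))).
    + rewrite pow2_abs, <- (sqrt_pow2 (Rabs (t - u))), pow2_abs by apply Rabs_pos.
      f_equal. transitivity (al ^ 2 * (1 + q ^ 2) * (t - u) ^ 2); [ring | rewrite Hal2; ring].
    + apply cong_trans with ((a + al * t) - (a + al * u));
        [apply cong_sub; apply S1of_cong | exists 0%Z; ring].
    + rewrite Rabs_mult, (Rabs_right al) by lra.
      assert (Rabs (t - u) < 1 / 2) by (split_Rabs; lra).
      pose proof (Rabs_pos (t - u)). nra.
  - intro p. split.
    + intros [s [C E]]. exists (s / al). apply injective_projections; cbn [fst snd].
      * apply S1_eq. apply cong_trans with (a + s); [|apply cong_sym, C].
        replace (al * (s / al)) with s by (field; lra). apply S1of_cong.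
      * rewrite E. field. lra.
    + intros [t <-]. exists (al * t). split; [apply S1of_cong | reflexivity].
Qed.

Lemma helix_column a c q (t : S1) s0 y : cong (proj1_sig t) (a + s0) ->
  helix a c q (t, y) <-> exists k : Z, y = c + q * (s0 + IZR k).
Proof.
  intro Ht. split.
  - intros [s [C E]]. cbn in E. destruct (cong_trans _ _ _ (cong_sym _ _ Ht) C) as [k Hk].
    exists (- k)%Z. rewrite opp_IZR, E. f_equal. f_equal. lra.
  - intros [k ->]. exists (s0 + IZR k). split; [|reflexivity].
    destruct Ht as [l Hl]. exists (l - k)%Z. unfold angle. cbn. rewrite minus_IZR. lra.
Qed.

Lemma helix_flat a c p : helix a c 0 p <-> snd p = c.
Proof.
  split.
  - intros [s [_ E]]. rewrite E. ring.
  - intro E. exists (angle p - a). split; [apply cong_sym; exists 0%Z; ring | rewrite E; ring].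
Qed.

Lemma pigeonhole_mod (a b : Z) (u : Z -> Z) :
  (0 < b)%Z ->
  (forall i j, (0 <= i < a)%Z -> (0 <= j < a)%Z -> (b | u i - u j)%Z -> i = j) ->
  (a <= b)%Z.
Proof.
  intros Hb Hu.
  set (l := map (fun n => Z.to_nat (u (Z.of_nat n) mod b)) (seq 0 (Z.to_nat a))).
  assert (Hnodup : NoDup l).
  { apply NoDup_map_NoDup_ForallPairs; [|apply seq_NoDup].
    intros n n' Hn Hn' E; apply in_seq in Hn, Hn'.
    pose proof (Z.mod_pos_bound (u (Z.of_nat n)) b Hb).
    pose proof (Z.mod_pos_bound (u (Z.of_nat n')) b Hb).
    enough (Z.of_nat n = Z.of_nat n') by lia.
    apply Hu; try lia.
    replace (u (Z.of_nat n) - u (Z.of_nat n'))%Z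
      with ((u (Z.of_nat n) - u (Z.of_nat n) mod b) - (u (Z.of_nat n') - u (Z.of_nat n') mod b))%Z
      by lia.
    apply Z.divide_sub_r; apply Znumtheory.Zmod_divide_minus; auto. }
  assert (Hincl : incl l (seq 0 (Z.to_nat b))).
  { intros x Hx. apply in_map_iff in Hx as [n [<- _]]. apply in_seq.
    pose proof (Z.mod_pos_bound (u (Z.of_nat n)) b Hb). lia. }
  pose proof (NoDup_incl_length Hnodup Hincl) as Hlen.
  unfold l in Hlen. rewrite length_map, !length_seq in Hlen. lia.
Qed.

Lemma divide_small_diff (N i j : Z) :
  (0 <= i < N)%Z -> (0 <= j < N)%Z -> (N | i - j)%Z -> i = j.
Proof. intros Hi Hj [k Hk]. destruct (Z.lt_trichotomy k 0) as [?|[?|?]]; nia. Qed.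

Lemma index_preserving_bijection (u : Z -> Z) (N r : Z) :
  (0 < N)%Z -> (0 < r)%Z -> (forall j, exists i, u i = j) ->
  (forall i j, (N | i - j)%Z <-> (r | u i - u j)%Z) -> N = r.
Proof.
  intros HN Hr Hsurj Hdiv.
  destruct (functional_choice _ Hsurj) as [v Hv].
  apply Z.le_antisymm.
  - apply (pigeonhole_mod N r u Hr). intros i j Hi Hj Hij.
    apply (divide_small_diff N); auto. apply Hdiv; exact Hij.
  - apply (pigeonhole_mod r N v HN). intros i j Hi Hj Hij.
    apply (divide_small_diff r); auto. rewrite <- (Hv i), <- (Hv j). apply Hdiv; exact Hij.
Qed.

Definition maps_progressions (phi : R -> R) (m q : R) : Prop :=
  forall x y, (exists k : Z, y = x + IZR k * m) <-> (exists j : Z, phi y = phi x + IZR j * q).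

Section Progressions.

Variable phi : R -> R.
Hypothesis phi_inj : forall x y, phi x = phi y -> x = y.
Hypothesis phi_surj : forall z, exists x, phi x = z.

Lemma maps_progressions_neq0 m q : m <> 0 -> maps_progressions phi m q -> q <> 0.
Proof.
  intros Hm Hpr ->. destruct (proj1 (Hpr 0 m)) as [j Hj].
  { exists 1%Z. ring. }
  rewrite Rmult_0_r, Rplus_0_r in Hj. apply phi_inj in Hj. exact (Hm Hj).
Qed.

Lemma maps_progressions_ratio (N : Z) Q QN :
  (0 < N)%Z -> maps_progressions phi 1 Q -> maps_progressions phi (IZR N) QN ->
  exists r : Z, QN = IZR r * Q /\ Z.abs r = N.
Proof.
  intros HN H1 HNpr.
  assert (HQ : Q <> 0) by (apply (maps_progressions_neq0 1); [lra | exact H1]).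
  assert (HQN : QN <> 0).
  { apply (maps_progressions_neq0 (IZR N)); [apply not_0_IZR; lia | exact HNpr]. }
  (* [u] indexes [phi k] in [phi 0 + Q Z]; it carries classes mod [N] onto classes mod [r]. *)
  destruct (functional_choice (fun k j => phi (IZR k) = phi 0 + IZR j * Q)) as [u Hu].
  { intro k. apply H1. exists k. ring. }
  assert (Hu_diff : forall i j (l : Z),
             phi (IZR i) = phi (IZR j) + IZR l * QN <-> IZR (u i - u j) * Q = IZR l * QN).
  { intros i j l. rewrite minus_IZR, Rmult_minus_distr_r, (Hu i), (Hu j).
    split; intro; lra. }
  destruct (phi_surj (phi 0 + QN)) as [y Hy].
  destruct (proj2 (HNpr 0 y)) as [k Hk]; [exists 1%Z; rewrite Hy; ring|].
  set (r := u (k * N)%Z).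
  assert (Hr : QN = IZR r * Q).
  { pose proof (Hu (k * N)%Z) as E. rewrite mult_IZR in E.
    rewrite Hk, Rplus_0_l in Hy. unfold r. lra. }
  assert (Hr0 : r <> 0%Z) by (intros E; rewrite E in Hr; lra).
  exists r. split; [exact Hr|].
  symmetry; apply index_preserving_bijection with u; [exact HN | lia | |].
  - intro j. destruct (phi_surj (phi 0 + IZR j * Q)) as [x Hx].
    destruct (proj2 (H1 0 x)) as [i Hi]; [exists j; exact Hx|].
    exists i. apply eq_IZR, (Rmult_eq_reg_r Q); [|exact HQ].
    pose proof (Hu i). rewrite Hi, Rplus_0_l, Rmult_1_r in Hx. lra.
  - intros i j. rewrite Z.divide_abs_l. split.
    + intros [k' Hk']. destruct (proj1 (HNpr (IZR j) (IZR i))) as [l Hl].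
      { exists k'. rewrite <- mult_IZR, <- Hk', minus_IZR. ring. }
      exists l. apply eq_IZR, (Rmult_eq_reg_r Q); [|exact HQ].
      apply Hu_diff in Hl. rewrite Hl, Hr, mult_IZR. ring.
    + intros [l Hl]. destruct (proj2 (HNpr (IZR j) (IZR i))) as [k' Hk'].
      { exists l. apply Hu_diff. rewrite Hl, Hr, mult_IZR. ring. }
      exists k'. apply eq_IZR. rewrite minus_IZR, mult_IZR. lra.
Qed.

Lemma unit_step_abs_const :
  (forall m, m <> 0 -> exists q, maps_progressions phi m q) ->
  forall x, Rabs (phi (x + 1) - phi x) = Rabs (phi 1 - phi 0).
Proof.
  intros Hall.
  destruct (Hall 1 R1_neq_R0) as [Q H1].
  enough (Hstep : forall x, Rabs (phi (x + 1) - phi x) = Rabs Q).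
  { intro x. rewrite Hstep, <- (Hstep 0), Rplus_0_l. reflexivity. }
  intro x.
  destruct (proj1 (H1 x (x + 1))) as [j Hj]; [exists 1%Z; ring|].
  assert (Hj0 : j <> 0%Z).
  { intros ->. rewrite Rmult_0_l, Rplus_0_r in Hj. apply phi_inj in Hj. lra. }
  destruct (Hall (IZR (Z.abs j))) as [QN HQN]; [apply not_0_IZR; lia|].
  destruct (maps_progressions_ratio (Z.abs j) Q QN ltac:(lia) H1 HQN) as [r [Hr Hrj]].
  (* As [j Q = +-QN], [phi (x + 1)] lies in the image of [x + |j| Z], so [|j|] divides 1. *)
  destruct (proj2 (HQN x (x + 1))) as [k Hk].
  { exists (Z.sgn j * Z.sgn r)%Z. rewrite Hj, Hr, <- Rmult_assoc, <- mult_IZR.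
    replace (Z.sgn j * Z.sgn r * r)%Z with j by nia. reflexivity. }
  assert (Hk1 : (k * Z.abs j = 1)%Z) by (apply eq_IZR; rewrite mult_IZR; lra).
  assert (Hj1 : Z.abs j = 1%Z) by (destruct (Z.lt_trichotomy k 0) as [?|[?|?]]; nia).
  rewrite Hj. replace (phi x + IZR j * Q - phi x) with (IZR j * Q) by ring.
  rewrite Rabs_mult, <- abs_IZR, Hj1, Rmult_1_l. reflexivity.
Qed.

End Progressions.

Section GeodesicPreservingMap.

Variables (f : Cyl -> Cyl) (th0 : S1).
Hypothesis f_bij : bijective_map f.
Hypothesis f_geod : geodesic_preserving f.
Hypothesis f_vertical0 : forall p, img f (vertical th0) p <-> vertical th0 p.

Let f_inj : forall p q, f p = f q -> p = q := proj1 f_bij.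

Lemma img_inj A p : img f A (f p) <-> A p.
Proof.
  split; [intros [q [Hq E]]; apply f_inj in E; subst q; exact Hq|].
  intro Hp. exists p. split; [exact Hp | reflexivity].
Qed.

Lemma img_inj_inter A B p : img f A p -> img f B p -> exists q, A q /\ B q /\ f q = p.
Proof.
  intros [q [Hq <-]] HB. exists q. split; [exact Hq | split; [apply img_inj, HB | reflexivity]].
Qed.

Definition col (t : S1) : S1 := fst (f (t, 0)).
Definition height (y : R) : R := snd (f (th0, y)).

Lemma img_vertical t p : img f (vertical t) p <-> vertical (col t) p.
Proof.
  assert (Ht' : exists t', forall p, img f (vertical t) p <-> vertical t' p).
  { destruct (classic (t = th0)) as [-> | Hne]; [exists th0; exact f_vertical0|].
    destruct (geodesic_cases _ (f_geod _ (vertical_geodesic t))) as [H | [a [c [q Hl]]]];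
      [exact H|].
    exfalso. set (p0 := (th0, c + q * (proj1_sig th0 - a)) : Cyl).
    assert (H1 : img f (vertical t) p0).
    { apply Hl, helix_column with (s0 := proj1_sig th0 - a); [exists 0%Z; ring|].
      exists 0%Z. ring. }
    assert (H2 : img f (vertical th0) p0) by (apply f_vertical0; reflexivity).
    destruct (img_inj_inter _ _ _ H1 H2) as [q0 [E1 [E2 _]]].
    apply Hne. rewrite <- E1. exact E2. }
  destruct Ht' as [t' Ht'].
  assert (Hcol : t' = col t) by (symmetry; apply Ht', img_inj; reflexivity).
  subst t'. apply Ht'.
Qed.

Lemma fst_f t y : fst (f (t, y)) = col t.
Proof. apply img_vertical, img_inj. reflexivity. Qed.

Lemma snd_f t y : snd (f (t, y)) = height y.
Proof.
  assert (Hcirc : forall p, helix 0 y 0 p <-> snd p = y) by (intro; apply helix_flat).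
  destruct (geodesic_cases _ (f_geod _ (helix_geodesic 0 y 0))) as [[t' Ht'] | [a [c [q Hl]]]].
  - exfalso.
    assert (Hcol : col th0 = t').
    { rewrite <- (fst_f th0 y). apply Ht', img_inj, Hcirc. reflexivity. }
    assert (Hup : helix 0 y 0 (th0, y + 1)).
    { apply img_inj, Ht'. unfold vertical. rewrite fst_f. exact Hcol. }
    apply Hcirc in Hup. cbn in Hup. lra.
  - destruct (Req_dec q 0) as [-> | Hq].
    + assert (E : forall t1, snd (f (t1, y)) = c).
      { intro t1. apply (helix_flat a). apply Hl, img_inj, Hcirc. reflexivity. }
      unfold height. rewrite !E. reflexivity.
    + (* The image would meet the vertical through [th0] twice, the circle meets it once. *)
      exfalso. set (s0 := proj1_sig th0 - a).
      assert (Honly : forall k : Z, (th0, c + q * (s0 + IZR k)) = f (th0, y)).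
      { intro k.
        assert (H1 : img f (helix 0 y 0) (th0, c + q * (s0 + IZR k))).
        { apply Hl, (helix_column a c q th0 s0);
            [exists 0%Z; unfold s0; ring | exists k; reflexivity]. }
        assert (H2 : img f (vertical th0) (th0, c + q * (s0 + IZR k)))
          by (apply f_vertical0; reflexivity).
        destruct (img_inj_inter _ _ _ H1 H2) as [p [Hp1 [Hp2 <-]]].
        f_equal. apply injective_projections; [exact Hp2 | apply Hcirc, Hp1]. }
      pose proof (Honly 0%Z) as E0. rewrite <- (Honly 1%Z) in E0.
      injection E0. intro E. apply Hq. simpl in E. lra.
Qed.

Lemma f_col_height t y : f (t, y) = (col t, height y).
Proof. apply injective_projections; [apply fst_f | apply snd_f]. Qed.

Lemma col_inj t t' : col t = col t' -> t = t'.
Proof.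
  intro E. assert (Hf : f (t, 0) = f (t', 0)) by (rewrite !f_col_height, E; reflexivity).
  apply f_inj in Hf. injection Hf. auto.
Qed.

Lemma height_inj y y' : height y = height y' -> y = y'.
Proof.
  intro E. assert (Hf : f (th0, y) = f (th0, y')) by (rewrite !f_col_height, E; reflexivity).
  apply f_inj in Hf. injection Hf. auto.
Qed.

Lemma height_surj z : exists y, height y = z.
Proof.
  destruct (proj2 f_bij (th0, z)) as [[t y] E].
  exists y. rewrite <- (snd_f t), E. reflexivity.
Qed.

Lemma height_maps_progressions m : m <> 0 -> exists q, maps_progressions height m q.
Proof.
  intro Hm. set (H := helix (proj1_sig th0) 0 m).
  assert (HH : forall (t : S1) s0 y, cong (proj1_sig t) (proj1_sig th0 + s0) ->
                 H (t, y) <-> exists k : Z, y = m * (s0 + IZR k)).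
  { intros t s0 y Ht. unfold H. rewrite (helix_column _ _ _ _ s0 y Ht).
    split; intros [k Hk]; exists k; lra. }
  destruct (geodesic_cases _ (f_geod _ (helix_geodesic (proj1_sig th0) 0 m)))
    as [[t' Ht'] | [a [c [q Hl]]]].
  - (* The helix meets every vertical, so [col] would be constant. *)
    exfalso.
    assert (Hcol : forall t, col t = t').
    { intro t. rewrite <- (fst_f t (m * (proj1_sig t - proj1_sig th0))).
      apply Ht', img_inj, HH with (s0 := proj1_sig t - proj1_sig th0); [exists 0%Z; ring|].
      exists 0%Z. ring. }
    set (t1 := S1of (proj1_sig th0 + 1 / 2)).
    assert (E : th0 = t1) by (apply col_inj; rewrite !Hcol; reflexivity).
    assert (Hhalf : proj1_sig th0 = proj1_sig th0 + 1 / 2).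
    { apply cong_small; [rewrite E at 1; apply S1of_cong | split_Rabs; lra]. }
    lra.
  - exists q. intros x y.
    set (t := S1of (proj1_sig th0 + x / m)).
    set (s1 := proj1_sig (col t) - a).
    assert (Hcolumn : forall z, H (t, z) <-> exists j : Z, height z = c + q * (s1 + IZR j)).
    { intro z. transitivity (helix a c q (f (t, z))).
      - rewrite <- Hl. symmetry. apply img_inj.
      - rewrite f_col_height. apply helix_column. exists 0%Z. unfold s1. ring. }
    assert (Hx : H (t, x))
      by (apply (HH t (x / m)); [apply S1of_cong | exists 0%Z; field; exact Hm]).
    apply Hcolumn in Hx as [j0 Hj0].
    transitivity (H (t, y)).
    { rewrite (HH t (x / m) y) by apply S1of_cong.
      split; intros [k Hk]; exists k; rewrite Hk; field; exact Hm. }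
    rewrite Hcolumn. split; intros [j Hj].
    + exists (j - j0)%Z. rewrite Hj, Hj0, minus_IZR. ring.
    + exists (j + j0)%Z. rewrite Hj, Hj0, plus_IZR. ring.
Qed.

End GeodesicPreservingMap.

Theorem lemma4p5 (f : Cyl -> Cyl) (th0 : S1) :
  bijective_map f ->
  geodesic_preserving f ->
  (forall p, img f (vertical th0) p <-> vertical th0 p) ->
  f (th0, 0) = (th0, 0) ->
  f (th0, 1) = (th0, 1) ->
  forall x y : Cyl, fst x = fst y -> dC x y = 1 -> dC (f x) (f y) = 1.
Proof.
  intros Hbij Hgeod Hvert H0 H1 x y Exy Dxy.
  set (phi := height f th0).
  assert (Hstep : forall b, Rabs (phi (b + 1) - phi b) = 1).
  { intro b. rewrite (unit_step_abs_const phi (height_inj f th0 Hbij Hgeod Hvert)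
                        (height_surj f th0 Hbij Hgeod Hvert)
                        (height_maps_progressions f th0 Hbij Hgeod Hvert)).
    unfold phi, height. rewrite H0, H1. cbn. rewrite Rminus_0_r. apply Rabs_R1. }
  rewrite (surjective_pairing x), (surjective_pairing y) in Dxy |- *.
  rewrite !(f_col_height f th0 Hbij Hgeod Hvert).
  rewrite dC_same_column in Dxy |- * by (cbn; congruence). cbn in Dxy |- *. fold phi.
  destruct (Rle_or_lt 0 (snd x - snd y)).
  - rewrite Rabs_right in Dxy by lra. replace (snd x) with (snd y + 1) by lra. apply Hstep.
  - rewrite Rabs_left in Dxy by lra. replace (snd y) with (snd x + 1) by lra.
    rewrite <- Rabs_Ropp, Ropp_minus_distr. apply Hstep.
Qed.
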